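(* Let $G$ be a simple directed graph and $W$ a CTLN with graph $G$ (legal parameters, nondegenerate). Suppose $\sigma$ is a permitted motif with $\sigma=\tau\cup\{k\}$, $k\notin\tau$, where $\tau$ has uniform in-degree $d$ and the in-degree of $k$ in $G|_\sigma$ satisfies $d^{in}_k\le d$. Then $\operatorname{idx}(\sigma)=-\operatorname{idx}(\tau)$.
   Context: Legal parameters: $\delta>0$, $0<\varepsilon<\frac{\delta}{\delta+1}$. $W=W(G,\varepsilon,\delta)$ has $W_{ii}=0$, $W_{ij}=-1+\varepsilon$ if $j\to i$, $W_{ij}=-1-\delta$ if $i\ne j$, $j\not\to i$; dynamics $\dot x_i=-x_i+[\sum_jW_{ij}x_j+\theta]_+$, $\theta>0$; nondegenerate: $\det(I-W_\rho)\ne0$ and all Cramer determinants for $(I-W_\rho)x=\theta1_\rho$ nonzero for all $\rho$. $W_\rho$ is the principal submatrix on $\rho$. $\sigma$ is a permitted motif if $\theta(I-W_\sigma)^{-1}1_\sigma$ has all entries positive. $\tau$ has uniform in-degree $d$ if every node of $\tau$ has in-degree $d$ in $G|_\tau$. $\operatorname{idx}(\rho)=\operatorname{sgn}\det(I-W_\rho)$. *)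

From HB Require Import structures.
From mathcomp Require Import all_boot all_order all_algebra.
Set Implicit Arguments. Unset Strict Implicit. Unset Printing Implicit Defensive.
Import Order.TTheory GRing.Theory Num.Theory.
Local Open Scope ring_scope.

(* Graph on nodes 'I_n: [G j i] means the edge j -> i. *)

Definition ctln_W (R : pzRingType) (n : nat) (G : rel 'I_n) (eps delta : R) : 'M[R]_n :=
  \matrix_(i, j) (if i == j then 0
                  else if G j i then -1 + eps else -1 - delta).

(* principal submatrix on rho (indices listed in increasing enum order) *)
Definition principal (R : Type) (n : nat) (rho : {set 'I_n}) (A : 'M[R]_n)
  : 'M[R]_#|rho| :=
  \matrix_(i, j) A (enum_val i) (enum_val j).

Definition IW (R : pzRingType) (n : nat) (W : 'M[R]_n) (rho : {set 'I_n})
  : 'M[R]_#|rho| := 1%:M - principal rho W.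

Definition cramer_mx (R : Type) (m : nat) (A : 'M[R]_m) (b : 'cV[R]_m) (c : 'I_m)
  : 'M[R]_m :=
  \matrix_(r, s) (if s == c then b r 0 else A r s).

Definition ctln_nondegenerate (R : comPzRingType) (n : nat) (W : 'M[R]_n) (theta : R) :=
  forall rho : {set 'I_n},
    \det (IW W rho) != 0 /\
    forall c : 'I_#|rho|, \det (cramer_mx (IW W rho) (const_mx theta) c) != 0.

Definition permitted_motif (R : numFieldType) (n : nat) (W : 'M[R]_n) (theta : R)
  (sigma : {set 'I_n}) :=
  forall i : 'I_#|sigma|,
    0 < (theta *: (invmx (IW W sigma) *m (const_mx 1 : 'cV[R]_#|sigma|))) i 0.

Definition indeg (n : nat) (G : rel 'I_n) (rho : {set 'I_n}) (i : 'I_n) : nat :=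
  #|[set j in rho | G j i]|.

Definition uniform_indeg (n : nat) (G : rel 'I_n) (tau : {set 'I_n}) (d : nat) :=
  forall i, i \in tau -> indeg G tau i = d.

Definition ctln_idx (R : numDomainType) (n : nat) (W : 'M[R]_n) (rho : {set 'I_n}) : R :=
  Num.sg (\det (IW W rho)).

(* Let A = I - W_sigma and let x > 0 be the fixed point, A x = theta 1.
   Because tau has uniform in-degree d, every row of A indexed by tau has the
   same sum lam over the columns of tau, and lam > 0 as eps < 1; the row of k
   has a strictly larger sum over tau since k has in-degree at most d.  Hence
   v = lam x - theta 1_tau satisfies (A v)_i = 0 for i in tau, (A v)_k < 0 and
   v_k = lam x_k > 0.  Cramer's rule for the k-th coordinate of v gives
   det(A) v_k = (A v)_k det(I - W_tau), so the two determinants have opposite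
   signs. *)

From mathcomp Require Import all_boot all_order all_algebra perm.
From mathcomp Require Import ring lra.

Set Implicit Arguments.
Unset Strict Implicit.
Unset Printing Implicit Defensive.
Import Order.TTheory GRing.Theory Num.Theory.
Local Open Scope ring_scope.

Section CramerDeterminants.
Variables (R : comPzRingType) (m : nat).
Implicit Types (A : 'M[R]_m) (b v : 'cV[R]_m) (c : 'I_m).

Lemma det_cramer_mx1 v c : \det (cramer_mx 1%:M v c) = v c 0.
Proof.
rewrite (expand_det_row _ c) (bigD1 c) //= big1 ?addr0; last first.
  by move=> s /negbTE neq_sc; rewrite !mxE neq_sc eq_sym neq_sc mul0r.
rewrite !mxE eqxx /cofactor addnn -signr_odd odd_double mul1r.
have -> : row' c (col' c (cramer_mx 1%:M v c)) = 1%:M.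
  by apply/matrixP=> a b; rewrite !mxE lift_eqF (inj_eq (@lift_inj _ c)).
by rewrite det1 mulr1.
Qed.

Lemma mulmx_cramer_mx1 A v c : A *m cramer_mx 1%:M v c = cramer_mx A (A *m v) c.
Proof.
apply/matrixP=> r s; rewrite !mxE; case: eqP => [->|neq_sc].
  by apply: eq_bigr => j _; rewrite !mxE eqxx.
rewrite -[in RHS](mulmx1 A) mxE; apply: eq_bigr => j _.
by rewrite !mxE; case: eqP.
Qed.

Lemma det_cramer_mx_mulmx A v c : \det (cramer_mx A (A *m v) c) = \det A * v c 0.
Proof. by rewrite -mulmx_cramer_mx1 det_mulmx det_cramer_mx1. Qed.

Lemma det_cramer_mx_supp1 A b c : (forall r, r != c -> b r 0 = 0) ->
  \det (cramer_mx A b c) = b c 0 * \det (row' c (col' c A)).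
Proof.
move=> b_supp; rewrite (expand_det_col _ c) (bigD1 c) //= big1 ?addr0; last first.
  by move=> r /b_supp b_r0; rewrite mxE eqxx b_r0 mul0r.
rewrite mxE eqxx /cofactor addnn -signr_odd odd_double mul1r; congr (_ * \det _).
by apply/matrixP=> a a'; rewrite !mxE lift_eqF.
Qed.

End CramerDeterminants.

Lemma sgr_det_minor (R : realDomainType) m (A : 'M[R]_m) (v : 'cV[R]_m) c :
  (forall r, r != c -> (A *m v) r 0 = 0) -> 0 < v c 0 -> (A *m v) c 0 < 0 ->
  Num.sg (\det A) = - Num.sg (\det (row' c (col' c A))).
Proof.
move=> Av_supp v_c_gt0 Av_c_lt0.
have := congr1 Num.sg (det_cramer_mx_mulmx A v c).
rewrite det_cramer_mx_supp1 // !sgrM (gtr0_sg v_c_gt0) (ltr0_sg Av_c_lt0).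
by rewrite mulr1 mulN1r => ->.
Qed.

Lemma det_reindex (R : comPzRingType) m p (M : 'M[R]_m) (N : 'M[R]_p)
    (h : 'I_m -> 'I_p) :
  injective h -> m = p -> (forall a b, M a b = N (h a) (h b)) -> \det M = \det N.
Proof.
move=> h_inj e; case: p / e N h h_inj => N h h_inj MN.
pose s := perm h_inj.
have -> : M = perm_mx s *m N *m perm_mx s^-1.
  by rewrite -row_permE -col_permE; apply/matrixP=> a b; rewrite !mxE !permE MN.
by rewrite !det_mulmx !det_perm odd_permV mulrC mulrA -expr2 sqrr_sign mul1r.
Qed.

Lemma permitted_motif_fixed_point (R : numFieldType) n (W : 'M[R]_n) theta sigma :
  \det (IW W sigma) != 0 -> permitted_motif W theta sigma ->
  exists2 x : 'cV_#|sigma|, IW W sigma *m x = const_mx theta & forall i, 0 < x i 0.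
Proof.
move=> det_neq0 permitted; exists (theta *: (invmx (IW W sigma) *m const_mx 1)) => //.
rewrite -scalemxAr mulmxA mulmxV ?unitmxE ?unitfE // mul1mx.
by apply/matrixP=> i j; rewrite !mxE mulr1.
Qed.

Section PrincipalSubmatrices.
Variables (R : comPzRingType) (n : nat).
Implicit Types (B W : 'M[R]_n) (rho tau : {set 'I_n}).

Lemma IW_principal W rho : IW W rho = principal rho (1%:M - W).
Proof. by apply/matrixP=> i j; rewrite !mxE (inj_eq enum_val_inj). Qed.

Lemma principal_mulmx_indicator B rho tau r : tau \subset rho ->
  (principal rho B *m \col_j ((enum_val j \in tau)%:R)) r 0 =
  \sum_(y in tau) B (enum_val r) y.
Proof.
move=> tau_rho; rewrite mxE.
transitivity (\sum_(y in rho | y \in tau) B (enum_val r) y).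
  rewrite big_mkcondr [RHS]big_enum_val; apply: eq_bigr => j _; rewrite !mxE.
  by case: (_ \in tau); rewrite ?mulr1 ?mulr0.
by apply: eq_bigl => y; rewrite andb_idl // => /(subsetP tau_rho).
Qed.

Lemma enum_val_setD1 rho (c r : 'I_#|rho|) :
  r != c -> enum_val r \in rho :\ enum_val c.
Proof. by move=> r_neq_c; rewrite !inE enum_valP (inj_eq enum_val_inj) r_neq_c. Qed.

Lemma det_principal_setD1 B rho (c : 'I_#|rho|) :
  \det (row' c (col' c (principal rho B))) = \det (principal (rho :\ enum_val c) B).
Proof.
have rho'_lift a : enum_val (lift c a) \in rho :\ enum_val c.
  by apply: enum_val_setD1; rewrite lift_eqF.
pose h a := enum_rank_in (rho'_lift a) (enum_val (lift c a)).
have hK a : enum_val (h a) = enum_val (lift c a) by rewrite enum_rankK_in.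
have h_inj : injective h.
  by move=> a a' /(congr1 enum_val); rewrite !hK => /enum_val_inj /lift_inj.
apply: (det_reindex h_inj); first by rewrite (cardsD1 (enum_val c) rho) enum_valP.
by move=> a a'; rewrite !mxE !hK.
Qed.

End PrincipalSubmatrices.

Lemma indeg_lt_card (n : nat) (G : rel 'I_n) (rho : {set 'I_n}) i :
  ~~ G i i -> i \in rho -> (indeg G rho i < #|rho|)%N.
Proof.
move=> no_loop rho_i; rewrite /indeg (cardsD1 i rho) rho_i ltnS.
apply/subset_leq_card/subsetP=> y; rewrite !inE => /andP[-> Gyi].
by rewrite andbT; apply: contraTneq Gyi => ->.
Qed.

Lemma indeg_setU1 (n : nat) (G : rel 'I_n) (rho : {set 'I_n}) i :
  ~~ G i i -> indeg G (i |: rho) i = indeg G rho i.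
Proof.
move=> no_loop; apply: eq_card => y; rewrite !inE.
by case: eqP => [->|] //=; rewrite (negbTE no_loop) andbF.
Qed.

Lemma sumr_indicator (R : pzSemiRingType) (T : finType) (A : {pred T})
    (P : pred T) :
  \sum_(y in A) ((P y)%:R : R) = #|[set y in A | P y]|%:R.
Proof.
transitivity (\sum_(y in A | P y) (1 : R)).
  by rewrite big_mkcondr; apply: eq_bigr => y _; case: (P y).
by rewrite sumr_const; congr (_ *+ _); apply: eq_card => y; rewrite inE.
Qed.

Lemma sumr_eq_in (R : pzSemiRingType) (T : finType) (A : {pred T}) (i : T) :
  \sum_(y in A) ((i == y)%:R : R) = (i \in A)%:R.
Proof.
rewrite sumr_indicator; congr _%:R; case: (boolP (i \in A)) => [A_i|A'i] /=.
  rewrite -(cards1 i); apply: eq_card => y.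
  by rewrite !inE eq_sym andb_idl // => /eqP ->.
rewrite -(cards0 T); apply: eq_card => y; rewrite !inE andbC.
by case: eqP => // <-; rewrite (negbTE A'i).
Qed.

Section CTLNRowSums.
Variables (R : realFieldType) (n : nat) (G : rel 'I_n) (eps delta : R).
Hypothesis no_loop : forall i, ~~ G i i.
Let B := 1%:M - ctln_W G eps delta.

Lemma ctln_rowsum i (rho : {set 'I_n}) :
  \sum_(y in rho) B i y =
  #|rho|%:R * (1 + delta) - (i \in rho)%:R * delta - (indeg G rho i)%:R * (eps + delta).
Proof.
have B_iy y : B i y = (1 + delta) - (i == y)%:R * delta - (G y i)%:R * (eps + delta).
  have -> : B i y = (i == y)%:R - ctln_W G eps delta i y by rewrite !mxE.
  rewrite mxE; case: eqP => [->|_] /=; first by rewrite (negbTE (no_loop _)) /=; ring.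
  by case: (G y i) => /=; ring.
rewrite (eq_bigr _ (fun y _ => B_iy y)) !sumrB sumr_const -!mulr_suml.
by rewrite sumr_eq_in sumr_indicator !mulr_natl.
Qed.

Variables (tau : {set 'I_n}) (d : nat).
Hypothesis tau_unif : uniform_indeg G tau d.

Lemma ctln_rowsum_uniform i : i \in tau ->
  \sum_(y in tau) B i y = #|tau|%:R * (1 + delta) - delta - d%:R * (eps + delta).
Proof. by move=> tau_i; rewrite ctln_rowsum tau_i tau_unif // mul1r. Qed.

Lemma ctln_rowsum_uniform_gt0 i : 0 < delta -> eps < 1 -> i \in tau ->
  0 < \sum_(y in tau) B i y.
Proof.
move=> delta_gt0 eps_lt1 tau_i; rewrite ctln_rowsum_uniform //.
have : (d.+1 <= #|tau|)%N by rewrite -(tau_unif tau_i) indeg_lt_card.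
rewrite -(ler_nat R) -natr1 => d_lt_t.
have : 0 <= (#|tau|%:R - d%:R - 1) * (1 + delta) by apply: mulr_ge0; lra.
have : 0 <= d%:R * (1 - eps) by apply: mulr_ge0; [exact: ler0n | lra].
lra.
Qed.

Lemma ctln_rowsum_lt_notin i j :
  0 < delta -> 0 < eps -> i \in tau -> j \notin tau -> (indeg G tau j <= d)%N ->
  \sum_(y in tau) B i y < \sum_(y in tau) B j y.
Proof.
move=> delta_gt0 eps_gt0 tau_i tau'j; rewrite -(ler_nat R) => dj_le_d.
rewrite ctln_rowsum_uniform // ctln_rowsum (negbTE tau'j) mul0r subr0.
have : 0 <= (d%:R - (indeg G tau j)%:R) * (eps + delta) by apply: mulr_ge0; lra.
lra.
Qed.

Lemma ctln_test_vector (sigma : {set 'I_n}) (c : 'I_#|sigma|) theta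
    (x : 'cV[R]_#|sigma|) :
  0 < delta -> 0 < eps -> eps < 1 -> 0 < theta -> tau != set0 ->
  sigma :\ enum_val c = tau -> (indeg G tau (enum_val c) <= d)%N ->
  principal sigma B *m x = const_mx theta -> 0 < x c 0 ->
  exists v : 'cV_#|sigma|,
    [/\ forall r, r != c -> (principal sigma B *m v) r 0 = 0,
        0 < v c 0 & (principal sigma B *m v) c 0 < 0].
Proof.
move=> delta_gt0 eps_gt0 eps_lt1 theta_gt0 /set0Pn[t0 tau_t0] tauE indeg_c Ax x_c_gt0.
have tau_sigma : tau \subset sigma by rewrite -tauE subD1set.
have tau'c : enum_val c \notin tau by rewrite -tauE setD11.
pose lam := \sum_(y in tau) B t0 y.
have rowsum_tau i : i \in tau -> \sum_(y in tau) B i y = lam.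
  by move=> tau_i; rewrite /lam !ctln_rowsum_uniform.
pose w : 'cV[R]_#|sigma| := \col_j ((enum_val j \in tau)%:R).
exists (lam *: x - theta *: w).
have Av r : (principal sigma B *m (lam *: x - theta *: w)) r 0 =
            theta * (lam - \sum_(y in tau) B (enum_val r) y).
  by rewrite mulmxBr -!scalemxAr Ax 5!mxE principal_mulmx_indicator // mulrBr mulrC.
split.
- move=> r /enum_val_setD1; rewrite tauE => tau_r.
  by rewrite Av rowsum_tau // subrr mulr0.
- rewrite !mxE (negbTE tau'c) mulr0 subr0 mulr_gt0 //.
  exact: ctln_rowsum_uniform_gt0.
- by rewrite Av pmulr_rlt0 // subr_lt0 ctln_rowsum_lt_notin.
Qed.

End CTLNRowSums.

Theorem lemma6 (R : realFieldType) (n : nat) (G : rel 'I_n)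
  (eps delta theta : R) (sigma tau : {set 'I_n}) (k : 'I_n) (d : nat) :
  (forall i, ~~ G i i) ->
  0 < delta -> 0 < eps -> eps < delta / (delta + 1) -> 0 < theta ->
  ctln_nondegenerate (ctln_W G eps delta) theta ->
  permitted_motif (ctln_W G eps delta) theta sigma ->
  tau != set0 ->
  sigma = k |: tau -> k \notin tau ->
  uniform_indeg G tau d ->
  (indeg G sigma k <= d)%N ->
  ctln_idx (ctln_W G eps delta) sigma = - ctln_idx (ctln_W G eps delta) tau.
Proof.
move=> no_loop delta_gt0 eps_gt0 eps_lt theta_gt0 nondeg permitted tau_neq0.
move=> sigmaE tau'k tau_unif indeg_k.
have eps_lt1 : eps < 1.
  by apply: (lt_le_trans eps_lt); rewrite ler_pdivrMr ?mul1r; lra.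
have sigma_k : k \in sigma by rewrite sigmaE setU11.
pose c := enum_rank_in sigma_k k.
have c_k : enum_val c = k by rewrite enum_rankK_in.
have sigmaD1 : sigma :\ enum_val c = tau by rewrite c_k sigmaE setU1K.
have [x Ax x_gt0] := permitted_motif_fixed_point (nondeg sigma).1 permitted.
rewrite IW_principal in Ax.
have [|v [Av_supp v_c_gt0 Av_c_lt0]] := ctln_test_vector no_loop tau_unif
    delta_gt0 eps_gt0 eps_lt1 theta_gt0 tau_neq0 sigmaD1 _ Ax (x_gt0 c).
  by rewrite c_k -(indeg_setU1 tau (no_loop k)) -sigmaE.
rewrite /ctln_idx !IW_principal -sigmaD1 -det_principal_setD1.
exact: sgr_det_minor Av_supp v_c_gt0 Av_c_lt0.
Qed.
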